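(* Let $a\in[-1,1)$. Let $M_3=\big(\int_{-1}^1t^{i+j}\,dt\big)_{0\le i,j\le3}$ and $v_a^{(3)}=\big(1-a,\ \tfrac{1-a^2}{2},\ \tfrac{1-a^3}{3},\ \tfrac{1-a^4}{4}\big)^\top$. Then the (unique) solution $z$ of $M_3z=v_a^{(3)}$ belongs to $(0,\infty)^4$ if and only if $\frac1{\sqrt5}<a<\frac{\sqrt{105}-5}{10}$. *)

From Stdlib Require Import Reals.
From Coquelicot Require Import Coquelicot.
From mathcomp Require Import all_boot all_algebra.
From mathcomp Require Import Rstruct.

Set Implicit Arguments. Unset Strict Implicit. Unset Printing Implicit Defensive.

Definition M3 : 'M[R]_4 :=
  \matrix_(i < 4, j < 4) RInt (fun t : R => pow t (i + j)) (Ropp R1) R1.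

Definition va3 (a : R) : 'cV[R]_4 :=
  \col_(k < 4) Rdiv (Rminus R1 (pow a k.+1)) (INR k.+1).

From Stdlib Require Import Reals.
From Coquelicot Require Import Coquelicot.
From mathcomp Require Import all_boot all_order all_algebra.
From mathcomp Require Import Rstruct ring lra.

Import Order.TTheory GRing.Theory Num.Theory.

(* The moments of [-1,1] vanish in odd degree, so M_3 splits into two 2x2
   blocks (even and odd indices) and has an explicit inverse.  Solving gives
     z = ((1-a)(4-5a-5a^2)/8, 15/32 (1-a^2)(3-7a^2),
          15/8 a(1-a^2), 35/32 (1-a^2)(5a^2-1)),
   and for -1 <= a < 1 the signs are read off the factors: z_2 > 0 iff a > 0,
   z_3 > 0 iff 5a^2 > 1, z_0 > 0 iff 5a^2 + 5a < 4, while z_1 > 0 follows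
   because a^2 < 3/7 below the root (sqrt 105 - 5)/10 of 5a^2 + 5a - 4. *)

Lemma RInt_pow (a b : R) (n : nat) :
  RInt (fun t => pow t n) a b = ((b ^+ n.+1 - a ^+ n.+1) / n.+1%:R)%R.
Proof.
pose P t := Rdiv (pow t n.+1) (INR n.+1).
have -> : ((b ^+ n.+1 - a ^+ n.+1) / n.+1%:R)%R = Rminus (P b) (P a).
  by rewrite /P !RealsE mulrBl.
apply: is_RInt_unique; apply: (is_RInt_derive P) => x _.
  rewrite /P; auto_derive => //; rewrite -/(INR n.+1) !RealsE.
  by rewrite mul1r mulrC mulKf // pnatr_eq0.
by apply: ex_derive_continuous; auto_derive.
Qed.

Local Open Scope ring_scope.

Definition moment {F : numFieldType} (n : nat) : F :=
  if odd n then 0 else 2 / n.+1%:R.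

Lemma RInt_pow_sym (n : nat) : RInt (fun t => pow t n) (Ropp R1) R1 = moment n.
Proof.
rewrite RInt_pow RoppE expr1n -signr_odd /moment /=.
by case: (odd n); rewrite /= ?expr0 ?subrr ?mul0r // expr1 opprK.
Qed.

Section MomentSystem.
Context {F : numFieldType}.
Implicit Types (a : F) (z : 'cV[F]_4).

Definition moment_mx : 'M[F]_4 := \matrix_(i, j) moment (i + j).

Definition moment_mx_inv : 'M[F]_4 := \matrix_(i, j)
  (nth [::] [:: [:: 9/8;    0;        -(15/8); 0];
                [:: 0;      75/8;     0;       -(105/8)];
                [:: -(15/8); 0;       45/8;    0];
                [:: 0;      -(105/8); 0;       175/8]] i)`_j.

Lemma moment_mx_invK : moment_mx_inv *m moment_mx = 1%:M.
Proof.
apply/matrixP => i j; rewrite !mxE !big_ord_recr big_ord0 /= !mxE.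
by case: i => [[|[|[|[|i]]]] Hi] //=; case: j => [[|[|[|[|j]]]] Hj] //=;
  rewrite /moment /=; field.
Qed.

Lemma moment_mx_unit : moment_mx \in unitmx.
Proof. by case/mulmx1_unit: moment_mx_invK. Qed.

Definition tail_moments a : 'cV[F]_4 := \col_(k < 4) ((1 - a ^+ k.+1) / k.+1%:R).

Definition moment_solution a : seq F :=
  [:: (1 - a) * (4 - 5 * a - 5 * a ^+ 2) / 8;
      15 / 32 * (1 - a ^+ 2) * (3 - 7 * a ^+ 2);
      15 / 8 * a * (1 - a ^+ 2);
      35 / 32 * (1 - a ^+ 2) * (5 * a ^+ 2 - 1)].

Lemma moment_mx_solve a z :
  moment_mx *m z = tail_moments a -> forall i : 'I_4, z i 0 = (moment_solution a)`_i.
Proof.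
move=> Mz i; rewrite -[z]mul1mx -moment_mx_invK -mulmxA Mz.
rewrite !mxE !big_ord_recr big_ord0 /= !mxE.
by case: i => [[|[|[|[|i]]]] Hi] //=; field.
Qed.

End MomentSystem.

Section Positivity.
Context {F : rcfType}.
Implicit Types (a x : F).

Lemma inv_sqrt_ltr x a :
  0 < x -> (1 / Num.sqrt x < a) = (0 < a) && (1 < x * a ^+ 2).
Proof.
move=> x_gt0; have s_gt0 : 0 < Num.sqrt x by rewrite sqrtr_gt0.
have -> : x * a ^+ 2 = (a * Num.sqrt x) ^+ 2 by rewrite exprMn sqr_sqrtr ?ltW // mulrC.
rewrite ltr_pdivrMr //; move: (Num.sqrt x) s_gt0 => s s_gt0.
rewrite expr2; apply/idP/andP => [lt1 | [a_gt0 lt1]]; first by split; nra.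
have as_gt0 : 0 < a * s by rewrite mulr_gt0.
nra.
Qed.

Lemma ltr_sqrt105_root a :
  0 <= a -> (a < (Num.sqrt 105 - 5) / 10) = (5 * a ^+ 2 + 5 * a < 4).
Proof.
move=> a_ge0; have r_ge0 : 0 <= Num.sqrt (105 : F) by rewrite sqrtr_ge0.
have r2 : Num.sqrt (105 : F) ^+ 2 = 105 by rewrite sqr_sqrtr.
rewrite ltr_pdivlMr //; apply/idP/idP => lt; nra.
Qed.

Lemma moment_solution_gt0 a : -1 <= a < 1 ->
  all (> 0) (moment_solution a) = (1 / Num.sqrt 5 < a < (Num.sqrt 105 - 5) / 10).
Proof.
case/andP=> a_ge a_lt1; rewrite inv_sqrt_ltr // /= andbT.
have [a_le0 | a_gt0] := lerP a 0.
  by apply/negbTE/and4P => -[_ _ z2 _]; nra.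
rewrite /= ltr_sqrt105_root ?ltW //.
by apply/and4P/andP => [[z0 z1 z2 z3] | [a2_gt lt_root]]; split; nra.
Qed.

End Positivity.

Lemma M3E : M3 = moment_mx.
Proof. by apply/matrixP => i j; rewrite !mxE RInt_pow_sym. Qed.

Lemma va3E a : va3 a = tail_moments a.
Proof. by apply/matrixP => i j; rewrite !mxE !RealsE. Qed.

Theorem lemma4p3 (a : R) (ha : (-1 <= a < 1)%R) :
  M3 \in unitmx /\
  forall z : 'cV[R]_4, (M3 *m z)%R = va3 a ->
    ((forall i : 'I_4, (0 < z i ord0)%R) <->
     (1 / sqrt 5 < a < (sqrt 105 - 5) / 10)%R).
Proof.
rewrite M3E va3E; split=> [|z /moment_mx_solve zE]; first exact: moment_mx_unit.
rewrite !RsqrtE !IZRposE !INRE /= -moment_solution_gt0 //.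
split=> [z_gt0 | /(all_nthP 0) z_gt0 i]; last by rewrite zE; apply: z_gt0.
by apply/(all_nthP 0) => i lt_i4; rewrite -[i]/(Ordinal lt_i4 : nat) -zE.
Qed.
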